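(* Let $n\in\mathbb{N}_0$, let $f\in C^{2n}(\mathbb{R}^d,\mathbb{R})$, $\underline a\in C^{2n}(\mathbb{R}^d,\mathbb{R}^d)$, $b\in C^{2n+1}(\mathbb{R}^d,\mathbb{R}^{d\times m})$, and let $L^0=\sum_{k=1}^d\tilde a^k\frac{\partial}{\partial x^k}+\frac12\sum_{k,l=1}^d\sum_{j=1}^m b^{k,j}b^{l,j}\frac{\partial^2}{\partial x^k\partial x^l}$ with $\tilde a^i=\underline a^i+\frac12\sum_{k=1}^d\sum_{l=1}^m b^{k,l}\frac{\partial b^{i,l}}{\partial x^k}$. Then for every $x_0\in\mathbb{R}^d$ $$(L^0)^n f(x_0)=\sum_{\substack{t\in LTS(S)\\ \rho(t)=n}}\ \sum_{j_1,\dots,j_{s(t)/2}=1}^m\frac{F(t)(x_0)}{2^{s(t)/2}},$$ where the elementary differentials $F(t)$ are formed with the drift $\underline a$ (not $\tilde a$) at deterministic nodes.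
   Context: Fix $d,m\ge1$, $f:\mathbb{R}^d\to\mathbb{R}$, $\underline a:\mathbb{R}^d\to\mathbb{R}^d$, $b:\mathbb{R}^d\to\mathbb{R}^{d\times m}$ with columns $b^j$ and entries $b^{k,j}$. A monotonically labelled coloured tree with $l$ nodes consists of nodes $1,\dots,l$, a father map $t':\{2,\dots,l\}\to\{1,\dots,l-1\}$ with $t'(i)<i$ (node 1 is the root), and a colour per node: $\gamma$ (root), $\tau$ (deterministic) or $\sigma_j$ (stochastic, index $j$). $LTS(S)$ is the set of trees obtainable thus: start with the single node $1$ coloured $\gamma$; at each step, if the current tree has $\lambda$ nodes and $k-1$ pairs of stochastic nodes have been added so far, either (a) add node $\lambda+1$ coloured $\tau$ with father any node in $\{1,\dots,\lambda\}$, or (b) add nodes $\lambda+1,\lambda+2$, both coloured $\sigma_{j_k}$ ($j_k$ a formal index variable), with $t'(\lambda+1)\in\{1,\dots,\lambda\}$ and $t'(\lambda+2)\in\{1,\dots,\lambda+1\}$ (node $\lambda+1$ may be the father of node $\lambda+2$). $d(t)$ = number of $\tau$-nodes, $s(t)$ = number of stochastic nodes (even; index variables $j_1,\dots,j_{s/2}$), $\rho(t)=d(t)+s(t)/2$. The index variables range over $\{1,\dots,m\}$ in the sums. Elementary differential: $g^{(k)}(x)(v_1,\dots,v_k)$ has $I$-th component $\sum_{J_1,\dots,J_k}\frac{\partial^k g^I(x)}{\partial x^{J_1}\cdots\partial x^{J_k}}v_1^{J_1}\cdots v_k^{J_k}$; for a tree with index values fixed, recursively for node $i$ with children $c_1,\dots,c_k$: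 $F_i(x)=g_i^{(k)}(x)(F_{c_1}(x),\dots,F_{c_k}(x))$, with $g_i=f$ for $\gamma$, $\underline a$ for $\tau$, $b^j$ for $\sigma_j$; $F(t):=F_1$. *)

From mathcomp Require Import ssreflect ssrfun ssrbool eqtype ssrnat seq fintype bigop.
From Stdlib Require Import Reals ClassicalEpsilon.
From Stdlib Require List.

Set Implicit Arguments.
Unset Strict Implicit.
Unset Printing Implicit Defensive.

Definition pt (d : nat) := 'I_d -> R.

Section Analysis.
Variable d : nat.

Definition upd (x : pt d) (k : 'I_d) (t : R) : pt d :=
  fun i => if i == k then t else x i.

(* partial derivative d g / d x^k (total function: the derivative when it
   exists; unspecified otherwise) *)
Definition partial (k : 'I_d) (g : pt d -> R) : pt d -> R :=
  fun x => epsilon (inhabits 0%R)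
    (fun l => derivable_pt_lim (fun t => g (upd x k t)) (x k) l).

Definition dpart (ks : seq 'I_d) (g : pt d -> R) : pt d -> R :=
  foldr partial g ks.

Definition contRd (g : pt d -> R) : Prop :=
  forall x eps, (0 < eps)%R -> exists delta, (0 < delta)%R /\
    forall y : pt d, (forall i, (Rabs (y i - x i) < delta)%R) ->
      (Rabs (g y - g x) < eps)%R.

Definition Ck (k : nat) (g : pt d -> R) : Prop :=
  forall ks : seq 'I_d, (size ks <= k)%N ->
    contRd (dpart ks g) /\
    ((size ks < k)%N -> forall (i : 'I_d) (x : pt d),
        exists l, derivable_pt_lim (fun t => dpart ks g (upd x i t)) (x i) l).

Definition sumI (F : 'I_d -> R) : R := \big[Rplus/0%R]_(i < d) F i.

(* g^{(k)}(x)(v_1,...,v_k) for a scalar component g: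
   sum_{J_1..J_k} d^k g/dx^{J_1}..dx^{J_k} v_1^{J_1} ... v_k^{J_k} *)
Fixpoint deriv_apply (g : pt d -> R) (vs : seq (pt d -> 'I_d -> R)) : pt d -> R :=
  match vs with
  | [::] => g
  | v :: vs' => fun x => sumI (fun J => (deriv_apply (partial J g) vs' x * v x J)%R)
  end.

End Analysis.

(* colour of a non-root node: tau, or sigma_{j_k} where k is the (0-based)
   number of the index variable j_{k+1} *)
Inductive colour := Tau | Sig of nat.

(* A tree with l nodes, nodes labelled 0..l-1 (0 = root, coloured gamma).
   The list has l-1 entries; entry number (i-1) gives (father, colour) of node i. *)
Definition tree := seq (nat * colour).

Definition nnodes (t : tree) : nat := (size t).+1.

Definition is_tau (c : colour) : bool := if c is Tau then true else false.
Definition is_sig (c : colour) : bool := if c is Sig _ then true else false.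

Definition dnum (t : tree) : nat := count (fun e => is_tau e.2) t.
Definition snum (t : tree) : nat := count (fun e => is_sig e.2) t.
Definition rho (t : tree) : nat := dnum t + (snum t)./2.

(* LTS(S): trees obtainable by the growth process (0-based labels). *)
Inductive LTS : tree -> Prop :=
  | LTS_root : LTS [::]
  | LTS_det (t : tree) (p : nat) :
      LTS t -> (p < nnodes t)%N -> LTS (t ++ [:: (p, Tau)])
  | LTS_sto (t : tree) (p q : nat) :
      LTS t -> (p < nnodes t)%N -> (q < (nnodes t).+1)%N ->
      LTS (t ++ [:: (p, Sig (snum t)./2); (q, Sig (snum t)./2)]).

Definition father (t : tree) (i : nat) : nat := (nth (0, Tau) t i.-1).1.
Definition colour_of (t : tree) (i : nat) : colour := (nth (0, Tau) t i.-1).2.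

Definition children (t : tree) (i : nat) : seq nat :=
  filter (fun j => father t j == i) (iota 1 (size t)).

Section Elementary.
Variables (d m : nat).
Variable f : pt d -> R.
Variable a : 'I_d -> pt d -> R.
Variable b : 'I_d -> 'I_m -> pt d -> R.

Definition gcol (J : seq 'I_m) (c : colour) (I : 'I_d) : pt d -> R :=
  match c with
  | Tau => a I
  | Sig k => match List.nth_error J k with
             | Some j => b I j
             | None => fun _ => 0%R
             end
  end.

(* F_i for non-root node i (vector valued, given componentwise);
   fuel bounds the depth of recursion (labels strictly increase downwards). *)
Fixpoint Fnode (t : tree) (J : seq 'I_m) (fuel : nat) (i : nat) : pt d -> 'I_d -> R :=
  match fuel with
  | 0 => fun _ _ => 0%R
  | fuel'.+1 => fun x I =>
      deriv_apply (gcol J (colour_of t i) I) (map (Fnode t J fuel') (children t i)) x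
  end.

(* elementary differential F(t) = F_1 (the root, coloured gamma, uses f) *)
Definition Fel (t : tree) (J : seq 'I_m) : pt d -> R :=
  deriv_apply f (map (Fnode t J (nnodes t)) (children t 0)).

Fixpoint sumJ (r : nat) (G : seq 'I_m -> R) : R :=
  match r with
  | 0 => G [::]
  | r'.+1 => \big[Rplus/0%R]_(j < m) sumJ r' (fun J => G (j :: J))
  end.

Definition atil (i : 'I_d) : pt d -> R :=
  fun x => (a i x + / 2 * sumI (fun k => \big[Rplus/0%R]_(l < m)
                                  (b k l x * partial k (b i l) x)))%R.

Definition L0 (g : pt d -> R) : pt d -> R :=
  fun x => (sumI (fun k => atil k x * partial k g x)
            + / 2 * sumI (fun k => sumI (fun l => \big[Rplus/0%R]_(j < m)
                  (b k j x * b l j x * partial k (partial l g) x))))%R.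

End Elementary.

(* Write D_c g := sum_k c^k d_k g for the derivation along a vector field c.
   Because the Ito drift a~ contains the Stratonovich correction, the
   generator factors as  L^0 = D_a + 1/2 sum_j D_{b^j} D_{b^j}  (L0_Dvec);
   this is why F(t) uses the drift a and not a~.  The proof then rests on a
   grafting rule: if c is the vector field of a node colour, D_c F(t) is the
   sum of F(t') over the trees t' obtained by attaching one new leaf of that
   colour to any node of t (Fel_graft).  It follows from the Leibniz rule for the multilinear forms
   g^(k)(v_1,..,v_k) (Dvec_deriv_apply) by induction on the subtrees.
   Applying D_a grafts a tau-node, and D_{b^j} D_{b^j} grafts a pair of
   sigma-nodes sharing the new index j, so one application of L^0 maps the
   sum over LTS-trees of order n to the sum over those of order n+1, where
   the latter are enumerated without repetition by growing each tree of
   order n in all possible ways (trees_of_order).  Smoothness is tracked by the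
   predicate smooth k (iterated partial derivatives up to order k exist),
   which suffices since trees of order n have at most 2n non-root nodes. *)

From HB Require Import structures.
From mathcomp Require Import ssreflect ssrfun ssrbool eqtype ssrnat seq fintype bigop.
From Stdlib Require Import Reals ClassicalEpsilon FunctionalExtensionality Lia.
From mathcomp Require Import zify.
From Stdlib Require List.

Set Implicit Arguments.
Unset Strict Implicit.
Unset Printing Implicit Defensive.

HB.instance Definition _ := Monoid.isComLaw.Build R 0%R Rplus
  (fun x y z => esym (Rplus_assoc x y z)) Rplus_comm Rplus_0_l.
HB.instance Definition _ := Monoid.isMulLaw.Build R 0%R Rmult Rmult_0_l Rmult_0_r.
HB.instance Definition _ :=
  Monoid.isAddLaw.Build R Rmult Rplus Rmult_plus_distr_r Rmult_plus_distr_l.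

Section Calculus.
Variable d : nat.
Local Open Scope R_scope.
Implicit Types (g h : pt d -> R) (x : pt d) (i : 'I_d).

Definition ex_partial g i x :=
  exists l, derivable_pt_lim (fun t => g (upd x i t)) (x i) l.

Lemma upd_same x i : upd x i (x i) = x.
Proof. apply: functional_extensionality => j; rewrite /upd; by case: eqP => [->|]. Qed.

Lemma partial_spec g i x : ex_partial g i x ->
  derivable_pt_lim (fun t => g (upd x i t)) (x i) (partial i g x).
Proof. move=> H; rewrite /partial; exact: (epsilon_spec (inhabits 0) _ H). Qed.

Lemma partial_eq g i x l :
  derivable_pt_lim (fun t => g (upd x i t)) (x i) l -> partial i g x = l.
Proof. move=> H; apply: (uniqueness_limite _ _ _ _ (partial_spec _) H); by exists l. Qed.

Lemma coord_deriv_plus g h i x : ex_partial g i x -> ex_partial h i x ->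
  derivable_pt_lim (fun t => g (upd x i t) + h (upd x i t)) (x i)
    (partial i g x + partial i h x).
Proof. move=> Hg Hh; exact: derivable_pt_lim_plus (partial_spec Hg) (partial_spec Hh). Qed.

Lemma coord_deriv_mult g h i x : ex_partial g i x -> ex_partial h i x ->
  derivable_pt_lim (fun t => g (upd x i t) * h (upd x i t)) (x i)
    (partial i g x * h x + g x * partial i h x).
Proof.
move=> Hg Hh; have := derivable_pt_lim_mult _ _ _ _ _ (partial_spec Hg) (partial_spec Hh).
by cbv beta; rewrite upd_same.
Qed.

Lemma coord_deriv_sum (T : Type) (s : seq T) (P : pred T) (F : T -> pt d -> R) i x :
  (forall k, P k -> ex_partial (F k) i x) ->
  derivable_pt_lim (fun t => \big[Rplus/0]_(k <- s | P k) F k (upd x i t)) (x i)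
     (\big[Rplus/0]_(k <- s | P k) partial i (F k) x).
Proof.
elim: s => [|e s IH] H.
  rewrite big_nil (_ : (fun t => _) = fun _ => 0); first exact: derivable_pt_lim_const.
  by apply: functional_extensionality => t; rewrite big_nil.
rewrite big_cons (_ : (fun t => _) = fun t => if P e then F e (upd x i t) +
    \big[Rplus/0]_(k <- s | P k) F k (upd x i t)
  else \big[Rplus/0]_(k <- s | P k) F k (upd x i t)); last first.
  by apply: functional_extensionality => t; rewrite big_cons.
case Pe: (P e); last exact: IH.
exact: derivable_pt_lim_plus (partial_spec (H _ Pe)) (IH H).
Qed.

(* smooth k g: all iterated partial derivatives of g of order <= k exist
   everywhere (no continuity is needed for the algebraic identities below). *)
Fixpoint smooth (k : nat) g : Prop :=
  if k is k'.+1 then (forall i x, ex_partial g i x) /\ forall i, smooth k' (partial i g)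
  else True.

Lemma smooth_le (k k' : nat) g : (k <= k')%nat -> smooth k' g -> smooth k g.
Proof.
elim: k k' g => [//|k IH] [//|k'] g Hk [H1 H2]; split => // i; exact: IH (H2 i).
Qed.

Lemma Ck_smooth (k : nat) g : Ck k g -> smooth k g.
Proof.
move=> H.
have : forall ks : seq 'I_d, (size ks < k)%nat -> forall i x, ex_partial (dpart ks g) i x.
  by move=> ks Hs i x; case: (H ks (ltnW Hs)) => _ /(_ Hs i x).
clear H; elim: k g => [//|k IH] g H; split; first by move=> i x; exact: (H [::]).
move=> i; apply: IH => ks Hs j x.
have := H (rcons ks i); rewrite size_rcons ltnS => /(_ Hs j x).
by rewrite /dpart foldr_rcons.
Qed.

Lemma partial_plus g h i : (forall x, ex_partial g i x) -> (forall x, ex_partial h i x) ->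
  partial i (fun y => g y + h y) = fun x => partial i g x + partial i h x.
Proof.
move=> Hg Hh; apply: functional_extensionality => x; apply: partial_eq.
exact: coord_deriv_plus.
Qed.

Lemma partial_mult g h i : (forall x, ex_partial g i x) -> (forall x, ex_partial h i x) ->
  partial i (fun y => g y * h y) = fun x => partial i g x * h x + g x * partial i h x.
Proof.
move=> Hg Hh; apply: functional_extensionality => x; apply: partial_eq.
exact: coord_deriv_mult.
Qed.

Lemma partial_sum (T : Type) (s : seq T) (P : pred T) (F : T -> pt d -> R) i :
  (forall k x, P k -> ex_partial (F k) i x) ->
  partial i (fun y => \big[Rplus/0]_(k <- s | P k) F k y) =
  fun x => \big[Rplus/0]_(k <- s | P k) partial i (F k) x.
Proof.
move=> H; apply: functional_extensionality => x; apply: partial_eq.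
by apply: coord_deriv_sum => k Pk; exact: H.
Qed.

Lemma partial_const (c : R) i : partial i (fun _ : pt d => c) = fun _ => 0.
Proof.
apply: functional_extensionality => x; apply: partial_eq; exact: derivable_pt_lim_const.
Qed.

Lemma smooth_const (k : nat) (c : R) : smooth k (fun _ => c).
Proof.
elim: k c => [//|k IH] c; split => [i x|i]; last by rewrite partial_const.
by exists 0; exact: derivable_pt_lim_const.
Qed.

Lemma smooth_plus (k : nat) g h : smooth k g -> smooth k h -> smooth k (fun y => g y + h y).
Proof.
elim: k g h => [//|k IH] g h [Hg1 Hg2] [Hh1 Hh2]; split => [i x|i].
  by eexists; exact: coord_deriv_plus.
rewrite (partial_plus (Hg1 i) (Hh1 i)); exact: IH (Hg2 i) (Hh2 i).
Qed.

Lemma smooth_mult (k : nat) g h : smooth k g -> smooth k h -> smooth k (fun y => g y * h y).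
Proof.
elim: k g h => [//|k IH] g h Hg Hh; have [Hg1 Hg2] := Hg; have [Hh1 Hh2] := Hh.
split => [i x|i]; first by eexists; exact: coord_deriv_mult.
rewrite (partial_mult (Hg1 i) (Hh1 i)).
apply: smooth_plus; apply: IH; by [apply: Hg2 | apply: Hh2 | apply: smooth_le Hg | apply: smooth_le Hh].
Qed.

Lemma smooth_sum (k : nat) (T : Type) (s : seq T) (P : pred T) (F : T -> pt d -> R) :
  (forall j, P j -> smooth k (F j)) -> smooth k (fun y => \big[Rplus/0]_(j <- s | P j) F j y).
Proof.
move=> H; elim: s => [|e s IH].
  rewrite (_ : (fun y => _) = fun _ => 0); first exact: smooth_const.
  by apply: functional_extensionality => y; rewrite big_nil.
rewrite (_ : (fun y => _) = fun y => if P e then F e y + \big[Rplus/0]_(j <- s | P j) F j y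
  else \big[Rplus/0]_(j <- s | P j) F j y); last first.
  by apply: functional_extensionality => y; rewrite big_cons.
case Pe: (P e) => //; apply: smooth_plus => //; exact: H.
Qed.

Lemma smooth_sumI (k : nat) (F : 'I_d -> pt d -> R) :
  (forall j, smooth k (F j)) -> smooth k (fun y => sumI (fun j => F j y)).
Proof. move=> H; exact: smooth_sum. Qed.

Definition Dvec (c : pt d -> 'I_d -> R) g : pt d -> R :=
  fun x => sumI (fun k => c x k * partial k g x).

Lemma smooth_Dvec (k : nat) c g :
  (forall I, smooth k (fun x => c x I)) -> smooth k.+1 g -> smooth k (Dvec c g).
Proof. by move=> Hc [_ Hg]; apply: smooth_sumI => I; apply: smooth_mult; [exact: Hc | exact: Hg]. Qed.

Lemma Dvec_mult c g h x : smooth 1 g -> smooth 1 h ->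
  Dvec c (fun y => g y * h y) x = Dvec c g x * h x + g x * Dvec c h x.
Proof.
move=> [Hg _] [Hh _]; rewrite /Dvec /sumI big_distrl big_distrr -big_split /=.
by apply: eq_bigr => k _; rewrite partial_mult //; ring.
Qed.

Lemma Dvec_sum c (T : Type) (s : seq T) (P : pred T) (F : T -> pt d -> R) x :
  (forall j, P j -> smooth 1 (F j)) ->
  Dvec c (fun y => \big[Rplus/0]_(j <- s | P j) F j y) x =
  \big[Rplus/0]_(j <- s | P j) Dvec c (F j) x.
Proof.
move=> H; rewrite /Dvec /sumI.
rewrite (eq_bigr (fun k => c x k * \big[Rplus/0]_(j <- s | P j) partial k (F j) x)).
  by rewrite exchange_big /=; apply: eq_bigr => k _; rewrite big_distrr.
move=> k _; rewrite partial_sum // => j y Pj; by case: (H j Pj) => /(_ k y).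
Qed.

Lemma Dvec_sumI c (F : 'I_d -> pt d -> R) x : (forall j, smooth 1 (F j)) ->
  Dvec c (fun y => sumI (fun j => F j y)) x = sumI (fun j => Dvec c (F j) x).
Proof. by move=> H; apply: Dvec_sum. Qed.

Lemma Dvec_scal c (r : R) g x : smooth 1 g -> Dvec c (fun y => g y * r) x = Dvec c g x * r.
Proof.
move=> Hg; rewrite Dvec_mult //; last exact: smooth_const.
have -> : Dvec c (fun _ => r) x = 0.
  by rewrite /Dvec /sumI big1 // => k _; rewrite partial_const; ring.
ring.
Qed.

End Calculus.

Section Leibniz.
Variable d : nat.
Local Open Scope R_scope.
Implicit Types (c : pt d -> 'I_d -> R) (g : pt d -> R).

Lemma smooth_deriv_apply (n : nat) (V : nat -> pt d -> 'I_d -> R) (ks : seq nat) g :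
  smooth (n + size ks) g -> (forall k I, k \in ks -> smooth n (fun x => V k x I)) ->
  smooth n (deriv_apply g (map V ks)).
Proof.
elim: ks g => [|k ks IH] g Hg HV /=; first by rewrite addn0 in Hg.
apply: smooth_sumI => J; apply: smooth_mult; last by apply: HV; rewrite inE eqxx.
apply: IH; last by move=> k' I Hk'; apply: HV; rewrite inE Hk' orbT.
by rewrite addnS in Hg; case: Hg => _; apply.
Qed.

Lemma Dvec_deriv_apply_cons c g v vs x :
  (forall J, smooth 1 (deriv_apply (partial J g) vs)) ->
  (forall J, smooth 1 (fun y => v y J)) ->
  Dvec c (deriv_apply g (v :: vs)) x =
  sumI (fun J => Dvec c (deriv_apply (partial J g) vs) x * v x J +
                 deriv_apply (partial J g) vs x * Dvec c (fun y => v y J) x).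
Proof.
move=> Hg Hv; rewrite [deriv_apply g _]/= Dvec_sumI => [|J]; last exact: smooth_mult.
by apply: eq_bigr => J _; rewrite Dvec_mult.
Qed.

Lemma big_orb_disj (s : seq nat) (A B : pred nat) (F : nat -> R) :
  (forall p, ~~ (A p && B p)) ->
  \big[Rplus/0]_(p <- s | A p || B p) F p =
  \big[Rplus/0]_(p <- s | A p) F p + \big[Rplus/0]_(p <- s | B p) F p.
Proof.
move=> H; rewrite big_mkcond (big_mkcond A) (big_mkcond B) -big_split /=.
by apply: eq_bigr => p _; move: (H p); case: (A p); case: (B p) => //= _; ring.
Qed.

(* Leibniz rule for g^(k)(V_k1,..,V_kr): differentiating g adds the argument
   c, differentiating V_k yields the terms W p k for the indices p with
   D k p, and W p k = V k otherwise.  When each index p occurs for at most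
   one argument, the terms regroup as a sum over p of g^(r)(W p k1,..). *)
Lemma Dvec_deriv_apply c (V : nat -> pt d -> 'I_d -> R)
  (W : nat -> nat -> pt d -> 'I_d -> R) (D : nat -> nat -> bool) (P ks : seq nat) :
  (forall k I, k \in ks -> smooth 1 (fun x => V k x I)) ->
  (forall k x I, k \in ks ->
     Dvec c (fun y => V k y I) x = \big[Rplus/0]_(p <- P | D k p) W p k x I) ->
  (forall p k, k \in ks -> ~~ D k p -> W p k = V k) ->
  (forall p, count (fun k => D k p) ks <= 1)%nat ->
  forall g, smooth (size ks).+1 g ->
  forall x, Dvec c (deriv_apply g (map V ks)) x =
     deriv_apply g (rcons (map V ks) c) x +
     \big[Rplus/0]_(p <- P | has (fun k => D k p) ks) deriv_apply g (map (W p) ks) x.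
Proof.
elim: ks => [|k ks IH] HV HD HW Hc g Hg x.
  by rewrite /= big_pred0 // Rplus_0_r /Dvec /sumI; apply: eq_bigr => J _ /=; ring.
have inks k' : k' \in ks -> k' \in k :: ks by rewrite inE => ->; rewrite orbT.
have Hk : k \in k :: ks by rewrite inE eqxx.
have Hg' J : smooth (size ks).+1 (partial J g) by case: Hg => _; apply.
have only_k p : D k p -> ~~ has (fun k => D k p) ks.
  by move: (Hc p) => /= + Dp; rewrite Dp has_count add1n ltnS leqn0 => /eqP ->.
have W_rest p : D k p -> map (W p) ks = map V ks.
  move=> Dp; apply/eq_in_map => k' Hk'; apply: HW; first exact: inks.
  by apply: contra (only_k _ Dp) => Dk'; apply/hasP; exists k'.
have IH' J := IH (fun k' I Hk' => HV k' I (inks _ Hk')) (fun k' y I Hk' => HD k' y I (inks _ Hk'))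
  (fun p k' Hk' => HW p k' (inks _ Hk'))
  (fun p => leq_trans (leq_addl _ _) (Hc p)) _ (Hg' J) x.
rewrite map_cons Dvec_deriv_apply_cons; first last.
- by move=> J; apply: HV.
- by move=> J; apply: smooth_deriv_apply => [|k' I /inks]; [exact: Hg' | exact: HV].
rewrite /sumI (eq_bigr (fun J => deriv_apply (partial J g) (rcons (map V ks) c) x * V k x J
   + \big[Rplus/0]_(p <- P | has (fun k => D k p) ks)
       (deriv_apply (partial J g) (map (W p) ks) x * V k x J)
   + \big[Rplus/0]_(p <- P | D k p) (deriv_apply (partial J g) (map V ks) x * W p k x J)));
  last by move=> J _; rewrite IH' (HD _ _ _ Hk) Rmult_plus_distr_r big_distrl big_distrr.
rewrite !big_split /= big_orb_disj => [|p]; last by case Dp: (D k p) => //=; exact: only_k.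
rewrite [X in _ + X + _]exchange_big [X in _ + _ + X]exchange_big /=.
rewrite Rplus_assoc [X in _ + X]Rplus_comm; congr (_ + (_ + _)).
  by apply: eq_bigr => p Hp; apply: eq_bigr => J _; rewrite W_rest.
apply: eq_bigr => p Hp; have nDp : ~~ D k p by apply: contraL Hp => /only_k.
by apply: eq_bigr => J _; rewrite (HW _ _ Hk nDp).
Qed.

End Leibniz.

(* Colours form an eqType, so that trees do and can be enumerated. *)
Definition colour_eqb (c1 c2 : colour) : bool :=
  match c1, c2 with
  | Tau, Tau => true
  | Sig k1, Sig k2 => k1 == k2
  | _, _ => false
  end.

Lemma colour_eqP : Equality.axiom colour_eqb.
Proof. by case=> [|k1] [|k2] /=; try constructor => //; apply: (iffP eqP) => [->|[]]. Qed.

HB.instance Definition _ := hasDecEq.Build colour colour_eqP.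

Lemma count_le1 (T : eqType) (s : seq T) (P : pred T) : uniq s ->
  (forall u v, u \in s -> v \in s -> P u -> P v -> u = v) -> (count P s <= 1)%nat.
Proof.
elim: s => [//|x s IH] /= /andP [nx us] H; case Px: (P x) => /=; last first.
  by apply: IH => // u v Hu Hv; apply: H; rewrite inE ?Hu ?Hv orbT.
rewrite add1n ltnS leqNgt -has_count; apply/negP => /hasP [y Hy Py].
by move: nx; rewrite (H x y (mem_head _ _) _ Px Py) ?Hy // inE Hy orbT.
Qed.

(* Trees in which every node has a smaller father: these are the trees the
   growth process produces, and the node labels increase away from the root. *)
Definition valid (t : tree) := forall j, (0 < j)%nat -> (father t j < j)%nat.

Lemma father_rcons t e j : father (rcons t e) j =
  if (j.-1 < size t)%nat then father t j else if j.-1 == size t then e.1 else 0%nat.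
Proof. by rewrite /father nth_rcons; case: ifP => //; case: ifP. Qed.

Lemma colour_rcons t e j : colour_of (rcons t e) j =
  if (j.-1 < size t)%nat then colour_of t j else if j.-1 == size t then e.2 else Tau.
Proof. by rewrite /colour_of nth_rcons; case: ifP => //; case: ifP. Qed.

Lemma colour_rcons_old t e j :
  (0 < j)%nat -> j != (size t).+1 -> colour_of (rcons t e) j = colour_of t j.
Proof.
move=> H1 H2; rewrite colour_rcons; case: ifP => // H3.
by rewrite ifN ?/colour_of ?nth_default //; [lia | apply/eqP; lia].
Qed.

Lemma father0 t : valid t -> father t 0 = 0%nat.
Proof. by move=> Hv; move: (Hv 1%nat isT); rewrite /father /= ltnS leqn0 => /eqP. Qed.

Lemma father_le t j : valid t -> (father t j <= j)%nat.
Proof. by move=> Hv; case: j => [|j]; [rewrite father0 | apply: ltnW; apply: Hv]. Qed.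

Lemma valid_rcons t p col : valid t -> (p < (size t).+1)%nat -> valid (rcons t (p, col)).
Proof.
move=> Hv Hp j Hj; rewrite father_rcons; case: ifP => H1; first exact: Hv.
by case: ifP => /= [/eqP|]; lia.
Qed.

Lemma mem_children t i k :
  (k \in children t i) = ((0 < k <= size t)%nat && (father t k == i)).
Proof. by rewrite /children mem_filter mem_iota andbC; congr (_ && _); apply/idP/idP; lia. Qed.

Lemma children_uniq t i : uniq (children t i).
Proof. exact/filter_uniq/iota_uniq. Qed.

Lemma children_size t i : (size (children t i) <= size t)%nat.
Proof. by rewrite /children size_filter (leq_trans (count_size _ _)) ?size_iota. Qed.

Lemma children_gt t i k : valid t -> k \in children t i -> (i < k)%nat.
Proof. by move=> Hv; rewrite mem_children => /andP [/andP [H0 _] /eqP <-]; apply: Hv. Qed.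

Lemma children_nil t i : valid t -> (size t <= i)%nat -> children t i = [::].
Proof.
move=> Hv Hi; rewrite /children (@eq_in_filter _ _ pred0); first by elim: (iota _ _).
by move=> j; rewrite mem_iota => /andP [H1 H2] /=; apply/eqP => E; have := Hv j H1; lia.
Qed.

Lemma children_rcons t p col i : children (rcons t (p, col)) i =
  if p == i then rcons (children t i) (size t).+1 else children t i.
Proof.
rewrite /children size_rcons -(addn1 (size t)) iotaD filter_cat.
rewrite (@eq_in_filter _ _ (fun j => father t j == i)); last first.
  by move=> j; rewrite mem_iota => /andP [H1 H2]; rewrite father_rcons ifT //; lia.
rewrite /= father_rcons add1n /= ltnn eqxx /=.
by case: eqP => _; rewrite ?cats1 ?cats0 ?addn1.
Qed.

Definition descendant (t : tree) (i p : nat) := exists n, iter n (father t) p = i.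

Definition descendantb t i p : bool :=
  if excluded_middle_informative (descendant t i p) then true else false.

Lemma descendantP t i p : reflect (descendant t i p) (descendantb t i p).
Proof. by rewrite /descendantb; case: excluded_middle_informative => H; constructor. Qed.

Section Descendants.
Variable t : tree.
Hypothesis Hv : valid t.

Lemma iter_father_le n p : (iter n (father t) p <= p)%nat.
Proof. elim: n => [//|n IH] /=; exact: leq_trans (father_le _ Hv) IH. Qed.

Lemma descendant_refl i : descendant t i i.
Proof. by exists 0%nat. Qed.

Lemma descendant_child i k p :
  k \in children t i -> descendant t k p -> descendant t i p.
Proof. by rewrite mem_children => /andP [_ /eqP Hf] [n Hn]; exists n.+1; rewrite /= Hn. Qed.

Lemma descendant_gt i k p : k \in children t i -> descendant t k p -> (i < p)%nat.
Proof.
move=> Hk [n Hn]; have := children_gt Hv Hk; have := iter_father_le n p; rewrite Hn; lia.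
Qed.

Lemma descendant_root p : descendant t 0 p.
Proof.
exists p; suff : forall n, (iter n (father t) p <= p - n)%nat.
  by move=> /(_ p); rewrite subnn leqn0 => /eqP.
elim=> [|n IH] /=; first by rewrite subn0.
case: (posnP (iter n (father t) p)) => H0; first by rewrite H0 father0.
by have := Hv H0; lia.
Qed.

Lemma descendant_split i p : (p <= size t)%nat -> descendant t i p ->
  p = i \/ exists2 k, k \in children t i & descendant t k p.
Proof.
move=> Hp [n]; elim: n => [/= ->|n IH]; first by left.
rewrite /=; set k := iter n (father t) p => Hk.
case: (posnP k) => Hk0; first by apply: IH; rewrite -Hk Hk0 father0.
right; exists k; last by exists n.
by rewrite mem_children Hk eqxx andbT Hk0 /= (leq_trans (iter_father_le _ _)).
Qed.

Lemma descendant_uniq i k1 k2 p : k1 \in children t i -> k2 \in children t i ->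
  descendant t k1 p -> descendant t k2 p -> k1 = k2.
Proof.
move=> H1 H2 [n1 E1] [n2 E2].
wlog le12 : k1 k2 n1 n2 H1 H2 E1 E2 / (n1 <= n2)%nat.
  move=> Hw; case: (leqP n1 n2) => [le|/ltnW le]; first exact: (Hw k1 k2 n1 n2).
  by symmetry; apply: (Hw k2 k1 n2 n1).
move: E2; rewrite -(subnK le12) iterD E1; case: (n2 - n1)%nat => [//|n].
rewrite iterSr; move: H1; rewrite mem_children => /andP [_ /eqP ->] E.
by have := iter_father_le n i; rewrite E; have := children_gt Hv H2; lia.
Qed.

Lemma has_descendant_child i p : (p <= size t)%nat ->
  has (fun k => descendantb t k p) (children t i) = descendantb t i p && (p != i).
Proof.
move=> Hp; apply/idP/idP.
  move=> /hasP [k Hk /descendantP Hkp]; apply/andP; split.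
    by apply/descendantP; exact: descendant_child Hk Hkp.
  by apply/eqP => E; have := descendant_gt Hk Hkp; lia.
move=> /andP [/descendantP Hd Hpi]; case: (descendant_split Hp Hd) => [E|[k Hk Hkp]].
  by rewrite E eqxx in Hpi.
by apply/hasP; exists k => //; apply/descendantP.
Qed.

End Descendants.

Definition sig_bounded (r : nat) (t : tree) : bool :=
  all (fun e : nat * colour => if e.2 is Sig k then (k < r)%nat else true) t.

Lemma colour_bounded r t i : sig_bounded r t ->
  if colour_of t i is Sig k then (k < r)%nat else true.
Proof.
move=> /all_nthP H; rewrite /colour_of.
by case: (ltnP i.-1 (size t)) => Hi; [exact: (H (0%nat, Tau)) | rewrite nth_default].
Qed.

Section Grafting.
Variables (d m : nat) (f : pt d -> R) (a : 'I_d -> pt d -> R) (b : 'I_d -> 'I_m -> pt d -> R).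
Local Open Scope R_scope.

Definition field (J : seq 'I_m) (col : colour) : pt d -> 'I_d -> R :=
  fun x I => gcol a b J col I x.

Lemma nth_error_cat_bounded (T : Type) (J K : seq T) k :
  (k < size J)%nat -> List.nth_error (J ++ K) k = List.nth_error J k.
Proof. by elim: J k => [|x J IH] [|k] //= Hk; exact: IH. Qed.

Lemma gcol_rcons (J : seq 'I_m) j I : gcol a b (rcons J j) (Sig (size J)) I = b I j.
Proof. by rewrite /=; elim: J. Qed.

Lemma Fnode_cat t (J K : seq 'I_m) F i : sig_bounded (size J) t ->
  Fnode a b t (J ++ K) F i = Fnode a b t J F i.
Proof.
move=> Hs; elim: F i => [//|F IH] i /=.
rewrite (_ : Fnode a b t (J ++ K) F = Fnode a b t J F); last exact: functional_extensionality.
apply: functional_extensionality => x; apply: functional_extensionality => I.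
have := colour_bounded i Hs; case: (colour_of t i) => [//|k] Hk.
by rewrite /= nth_error_cat_bounded.
Qed.

Lemma Fel_cat t (J K : seq 'I_m) : sig_bounded (size J) t -> Fel f a b t (J ++ K) = Fel f a b t J.
Proof.
move=> Hs; rewrite /Fel (_ : Fnode a b t (J ++ K) (nnodes t) = Fnode a b t J (nnodes t)) //.
by apply: functional_extensionality => i; apply: Fnode_cat.
Qed.

Lemma Fnode_rcons_off t p col J F k : (0 < k)%nat -> k != (size t).+1 ->
  ~ descendant t k p -> Fnode a b (rcons t (p, col)) J F k = Fnode a b t J F k.
Proof.
elim: F k => [//|F IH] k Hk HkN Hd /=.
rewrite children_rcons ifN; last by apply/eqP => E; apply: Hd; rewrite -E; exact: descendant_refl.
rewrite colour_rcons_old // (_ : map _ (children t k) = map (Fnode a b t J F) (children t k)) //.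
apply/eq_in_map => k' Hk'; move: (Hk'); rewrite mem_children => /andP [/andP [H0 Hs] _].
apply: IH => //; first by apply/eqP; lia.
by move=> H; apply: Hd; exact: descendant_child Hk' H.
Qed.

Lemma Fnode_new_leaf t p col J F : valid t -> (p < (size t).+1)%nat -> (0 < F)%nat ->
  Fnode a b (rcons t (p, col)) J F (size t).+1 = field J col.
Proof.
move=> Hv Hp; case: F => [//|F] _ /=.
rewrite children_nil ?size_rcons //; last exact: valid_rcons.
by rewrite colour_rcons /= ltnn eqxx.
Qed.

Lemma Fnode_fuel t J : valid t -> forall F F' i, (size t < i + F)%nat -> (0 < F)%nat ->
  (F <= F')%nat -> Fnode a b t J F i = Fnode a b t J F' i.
Proof.
move=> Hv; elim=> [//|F IH] [|F'] i H1 H2 H3 //=.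
rewrite (_ : map _ (children t i) = map (Fnode a b t J F') (children t i)) //.
apply/eq_in_map => k Hk.
have := children_gt Hv Hk; move: Hk; rewrite mem_children => /andP [/andP [Hk1 Hk2] _] Hik.
by apply: IH; lia.
Qed.

Lemma Fnode_smooth (n : nat) t J : (forall col I, smooth (n + size t) (gcol a b J col I)) ->
  forall F k I, smooth n (fun x => Fnode a b t J F k x I).
Proof.
move=> Hg; elim=> [|F IH] k I /=; first exact: smooth_const.
apply: smooth_deriv_apply => //; apply: smooth_le (Hg _ _).
by rewrite leq_add2l; exact: children_size.
Qed.

Lemma Fel_smooth (n : nat) t J : smooth (n + size t) f ->
  (forall col I, smooth (n + size t) (gcol a b J col I)) -> smooth n (Fel f a b t J).
Proof.
move=> Hf Hg; apply: smooth_deriv_apply => [|k I _]; last exact: Fnode_smooth.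
by apply: smooth_le Hf; rewrite leq_add2l; exact: children_size.
Qed.

Lemma eq_big_filter_seq (s : seq nat) (P Q : pred nat) (F G : nat -> R) :
  {in s, P =1 Q} -> (forall p, p \in s -> Q p -> F p = G p) ->
  \big[Rplus/0]_(p <- s | P p) F p = \big[Rplus/0]_(p <- s | Q p) G p.
Proof.
move=> HPQ HFG; rewrite -[LHS]big_filter -[RHS]big_filter (eq_in_filter HPQ).
by apply: eq_big_seq => p; rewrite mem_filter => /andP [Qp Hp]; exact: HFG.
Qed.

(* Grafting rule for the subtree at node i: differentiating along the field
   of colour col the form g^(k)(F_children of i) gives the sum, over the nodes
   p of the subtree rooted at i, of the same form in the tree with a new leaf
   of colour col attached to p. *)
Definition subtree_graft t col J i := forall F g, (i <= size t)%nat ->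
  ((size t).+1 < i + F)%nat -> smooth (size t).+1 g -> forall x,
  Dvec (field J col) (deriv_apply g (map (Fnode a b t J F) (children t i))) x =
  \big[Rplus/0]_(p <- iota 0 (size t).+1 | descendantb t i p)
     deriv_apply g (map (Fnode a b (rcons t (p, col)) J F) (children (rcons t (p, col)) i)) x.

Lemma subtree_graft_step t col J i : valid t ->
  (forall col' I, smooth (size t).+1 (gcol a b J col' I)) ->
  (forall k, k \in children t i -> subtree_graft t col J k) -> subtree_graft t col J i.
Proof.
move=> Hv HG IH [|F] g Hi HF Hg x; first lia.
(* Each child k contributes the grafts below k (induction hypothesis); a
   graft outside the subtree of k leaves F_k unchanged, and every node lies
   below at most one child, so the Leibniz rule applies. *)
set V := Fnode a b t J F.+1; set W := fun p => Fnode a b (rcons t (p, col)) J F.+1.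
have Hgraft k y I : k \in children t i -> Dvec (field J col) (fun y => V k y I) y =
    \big[Rplus/0]_(p <- iota 0 (size t).+1 | descendantb t k p) W p k y I.
  move=> Hk; have Hik := children_gt Hv Hk.
  have Hks : (k <= size t)%nat by move: Hk; rewrite mem_children => /andP [/andP []].
  rewrite /V /= (IH k Hk F) //; last lia.
  by apply: eq_bigr => p _; rewrite /W /= colour_rcons_old //; [lia | apply/eqP; lia].
have Hoff p k : k \in children t i -> ~~ descendantb t k p -> W p k = V k.
  move=> Hk /descendantP Hd; move: Hk; rewrite mem_children => /andP [/andP [Hk1 Hk2] _].
  by apply: Fnode_rcons_off => //; apply/eqP; lia.
have Hone p : (count (fun k => descendantb t k p) (children t i) <= 1)%nat.
  apply: count_le1; first exact: children_uniq.
  by move=> k1 k2 H1 H2 /descendantP D1 /descendantP D2; exact: (descendant_uniq Hv H1 H2 D1 D2).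
have HV k I : k \in children t i -> smooth 1 (fun y => V k y I).
  by move=> _; apply: Fnode_smooth => col' I'; exact: HG.
rewrite (@Dvec_deriv_apply _ _ V W _ _ _ HV Hgraft Hoff Hone g); last first.
  by apply: smooth_le Hg; rewrite ltnS; exact: children_size.
(* The new argument of g^(k+1) is the leaf grafted at i itself. *)
rewrite -[RHS]big_filter [RHS](bigD1_seq i) ?filter_uniq ?iota_uniq //; last first.
  by rewrite mem_filter mem_iota /=; apply/andP; split; [apply/descendantP/descendant_refl | lia].
rewrite [X in _ = _ + X]big_filter_cond; congr (_ + _).
  have Hi1 : (i < (size t).+1)%nat by lia.
  rewrite children_rcons eqxx map_rcons (@Fnode_new_leaf t i col J F.+1 Hv Hi1 isT).
  congr (deriv_apply g (rcons _ _) x); apply/eq_in_map => k Hk; have Hik := children_gt Hv Hk.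
  move: (Hk); rewrite mem_children => /andP [/andP [Hk1 Hk2] _].
  symmetry; apply: Fnode_rcons_off => //; first by apply/eqP; lia.
  by move=> [n Hn]; have := iter_father_le Hv n i; rewrite Hn; lia.
apply: eq_big_filter_seq => [p|p _ /andP [_ Hpi]]; last by rewrite children_rcons ifN.
by rewrite mem_iota add0n => Hp; rewrite has_descendant_child //; lia.
Qed.

Lemma subtree_graft_all t col J : valid t ->
  (forall col' I, smooth (size t).+1 (gcol a b J col' I)) -> forall i, subtree_graft t col J i.
Proof.
move=> Hv HG i; have [n Hn] : exists n, (size t - i <= n)%nat by exists (size t - i)%nat.
elim: n i Hn => [|n IHn] i Hn; apply: subtree_graft_step => // k Hk;
  have := children_gt Hv Hk; move: Hk; rewrite mem_children => /andP [/andP [Hk1 Hk2] _] Hik.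
  lia.
by apply: IHn; lia.
Qed.

Lemma Fel_graft t col J : valid t -> smooth (size t).+1 f ->
  (forall col' I, smooth (size t).+1 (gcol a b J col' I)) ->
  forall x, Dvec (field J col) (Fel f a b t J) x =
  \big[Rplus/0]_(p <- iota 0 (nnodes t)) Fel f a b (t ++ [:: (p, col)]) J x.
Proof.
move=> Hv Hf HG x; rewrite /Fel.
rewrite (_ : map _ (children t 0) = map (Fnode a b t J (size t).+2) (children t 0)); last first.
  apply/eq_in_map => k Hk; apply: Fnode_fuel => //; have := children_gt Hv Hk; rewrite /nnodes; lia.
rewrite (@subtree_graft_all t col J Hv HG 0%nat (size t).+2 f) //; try lia.
rewrite (eq_bigl xpredT) => [|p]; last exact/descendantP/descendant_root.
by apply: eq_bigr => p _; rewrite cats1 /nnodes size_rcons.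
Qed.

End Grafting.

Definition grow (t : tree) : seq tree :=
  [seq t ++ [:: (p, Tau)] | p <- iota 0 (nnodes t)] ++
  [seq t ++ [:: (p, Sig (snum t)./2); (q, Sig (snum t)./2)]
     | p <- iota 0 (nnodes t), q <- iota 0 (nnodes t).+1].

Fixpoint trees_of_order (n : nat) : seq tree :=
  if n is n'.+1 then flatten (map grow (trees_of_order n')) else [:: [::]].

Lemma snum_det t p : snum (t ++ [:: (p, Tau)]) = snum t.
Proof. rewrite /snum count_cat /=; lia. Qed.

Lemma snum_sto t p q r r' : snum (t ++ [:: (p, Sig r); (q, Sig r')]) = (snum t).+2.
Proof. rewrite /snum count_cat /=; lia. Qed.

Lemma rho_det t p : rho (t ++ [:: (p, Tau)]) = (rho t).+1.
Proof. rewrite /rho snum_det /dnum count_cat /=; lia. Qed.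

Lemma rho_sto t p q r r' : rho (t ++ [:: (p, Sig r); (q, Sig r')]) = (rho t).+1.
Proof.
rewrite /rho snum_sto /dnum count_cat /=; lia.
Qed.

Lemma sig_bounded_le r r' t : (r <= r')%nat -> sig_bounded r t -> sig_bounded r' t.
Proof. by move=> le; apply: sub_all => -[p [|k]] //= H; exact: leq_trans H le. Qed.

Lemma LTS_inv t : LTS t -> [/\ valid t, ~~ odd (snum t) & sig_bounded (snum t)./2 t].
Proof.
elim=> [|t0 p Ht [Hv Ho Hs] Hp|t0 p q Ht [Hv Ho Hs] Hp Hq].
- by split => // j Hj; rewrite /father nth_default.
- rewrite snum_det; split => //; first by rewrite cats1; exact: valid_rcons.
  by rewrite /sig_bounded all_cat; apply/andP; split; [exact: Hs |].
- rewrite snum_sto /= negbK; split => //.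
    rewrite -cat_rcons cats1; apply: valid_rcons; first exact: valid_rcons.
    by rewrite size_rcons.
  rewrite /sig_bounded all_cat /= ltnSn !andbT; exact: (sig_bounded_le (leqnSn _) Hs).
Qed.

Lemma size_rho t : ~~ odd (snum t) -> (size t <= 2 * rho t)%nat.
Proof.
move=> Ho; have Hs : size t = (dnum t + snum t)%nat.
  rewrite /dnum /snum -(count_predC (fun e : nat * colour => is_tau e.2)); congr (_ + _)%nat.
  by apply: eq_count => -[? []].
have := odd_double_half (snum t); rewrite (negbTE Ho) add0n -muln2 => E.
by rewrite /rho Hs; lia.
Qed.

Lemma trees_of_order_sound n t : t \in trees_of_order n -> LTS t /\ rho t = n.
Proof.
elim: n t => [|n IH] t /=; first by rewrite inE => /eqP ->; split => //; constructor.
move=> /flatten_mapP [t0 /IH [L0 R0]].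
rewrite mem_cat => /orP [/mapP [p Hp ->]|/allpairsP [[p q] /= [Hp Hq ->]]].
  by rewrite rho_det R0; split => //; apply: LTS_det => //; move: Hp; rewrite mem_iota.
rewrite rho_sto R0; split => //.
apply: LTS_sto => //.
  by move: (Hp : p \in iota 0 (nnodes t0)); rewrite mem_iota.
by move: (Hq : q \in iota 0 (nnodes t0).+1); rewrite mem_iota.
Qed.

Lemma trees_of_order_complete t : LTS t -> t \in trees_of_order (rho t).
Proof.
elim=> [|t0 p Ht IH Hp|t0 p q Ht IH Hp Hq]; first by rewrite mem_head.
  rewrite rho_det /=; apply/flatten_mapP; exists t0 => //.
  by rewrite mem_cat; apply/orP; left; apply/mapP; exists p; rewrite ?mem_iota.
rewrite rho_sto /=; apply/flatten_mapP; exists t0 => //.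
by rewrite mem_cat; apply/orP; right; apply/allpairsP; exists (p, q); rewrite !mem_iota.
Qed.

(* Removing the last growth step: a left inverse of grow. *)
Definition parent_tree (e : tree) : tree :=
  if (last (0%nat, Tau) e).2 is Tau then take (size e).-1 e else take (size e).-2 e.

Lemma parent_tree_grow t e : e \in grow t -> parent_tree e = t.
Proof.
rewrite mem_cat => /orP [/mapP [p _ ->]|/allpairsP [[p q] /= [_ _ ->]]].
  by rewrite /parent_tree last_cat /= size_cat /= addn1 /= take_size_cat.
by rewrite /parent_tree last_cat /= size_cat /= addn2 /= take_size_cat.
Qed.

Lemma grow_uniq t : uniq (grow t).
Proof.
rewrite cat_uniq; apply/and3P; split.
- rewrite map_inj_uniq ?iota_uniq // => p1 p2 /(f_equal (drop (size t))).
  by rewrite !drop_size_cat // => -[].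
- apply/hasPn => e /allpairsP [[p q] [_ _ ->]]; apply/negP => /mapP [p' _].
  by move=> /(f_equal (fun s => (last (0%nat, Tau) s).2)); rewrite !last_cat.
- apply: allpairs_uniq; try exact: iota_uniq.
  move=> [p1 q1] [p2 q2] _ _ /= /(f_equal (drop (size t))).
  by rewrite !drop_size_cat // => -[-> ->].
Qed.

Lemma trees_of_order_uniq n : uniq (trees_of_order n).
Proof.
elim: n => [//|n] /=; elim: (trees_of_order n) => [//|t L IHL] /andP [tL uL].
change (uniq (grow t ++ flatten (map grow L))).
rewrite cat_uniq grow_uniq IHL // andbT; apply/hasPn => e /flatten_mapP [t' Ht' He'].
apply/negP => He; move: tL; rewrite -(parent_tree_grow He) (parent_tree_grow He').
by rewrite Ht'.
Qed.

Lemma sum_trees_of_order n (H : tree -> R) :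
  \big[Rplus/0%R]_(e <- trees_of_order n.+1) H e =
  \big[Rplus/0%R]_(t <- trees_of_order n)
    (\big[Rplus/0%R]_(p <- iota 0 (nnodes t)) H (t ++ [:: (p, Tau)]) +
     \big[Rplus/0%R]_(p <- iota 0 (nnodes t)) \big[Rplus/0%R]_(q <- iota 0 (nnodes t).+1)
        H (t ++ [:: (p, Sig (snum t)./2); (q, Sig (snum t)./2)]))%R.
Proof.
rewrite /= big_flatten big_map; apply: eq_bigr => t _.
by rewrite big_cat big_map big_allpairs_dep.
Qed.

Section IndexSums.
Variables (d m : nat).
Local Open Scope R_scope.

Lemma sumJ_ext (r : nat) (G G' : seq 'I_m -> R) :
  (forall J, size J = r -> G J = G' J) -> sumJ r G = sumJ r G'.
Proof.
elim: r G G' => [|r IH] G G' H /=; first exact: H.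
by apply: eq_bigr => j _; apply: IH => J HJ; apply: H; rewrite /= HJ.
Qed.

Lemma sumJ_big (r : nat) (T : Type) (s : seq T) (G : T -> seq 'I_m -> R) :
  sumJ r (fun J => \big[Rplus/0]_(p <- s) G p J) = \big[Rplus/0]_(p <- s) sumJ r (G p).
Proof.
elim: r G => [//|r IH] G /=; rewrite -exchange_big /=.
by apply: eq_bigr => j _; exact: (IH (fun p J => G p (j :: J))).
Qed.

Lemma sumJ_scal (r : nat) (c : R) (G : seq 'I_m -> R) :
  sumJ r (fun J => c * G J) = c * sumJ r G.
Proof.
elim: r G => [//|r IH] G /=; rewrite big_distrr /=.
by apply: eq_bigr => j _; exact: (IH (fun J => G (j :: J))).
Qed.

Lemma sumJ_rcons (r : nat) (G : seq 'I_m -> R) :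
  sumJ r.+1 G = sumJ r (fun J => \big[Rplus/0]_(j < m) G (rcons J j)).
Proof.
elim: r G => [//|r IH] G; rewrite [LHS]/=.
by apply: eq_bigr => j _; exact: (IH (fun J => G (j :: J))).
Qed.

Lemma smooth_sumJ (n r : nat) (G : seq 'I_m -> pt d -> R) :
  (forall J, smooth n (G J)) -> smooth n (fun x => sumJ r (fun J => G J x)).
Proof.
elim: r G => [|r IH] G H /=; first exact: H.
apply: (@smooth_sum d n _ _ _ (fun j x => sumJ r (fun J => G (j :: J) x))) => j _.
exact: (IH (fun J => G (j :: J))).
Qed.

Lemma Dvec_sumJ c (r : nat) (G : seq 'I_m -> pt d -> R) x : (forall J, smooth 1 (G J)) ->
  Dvec c (fun y => sumJ r (fun J => G J y)) x = sumJ r (fun J => Dvec c (G J) x).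
Proof.
elim: r G => [|r IH] G H //=.
rewrite (@Dvec_sum d c _ _ _ (fun j y => sumJ r (fun J => G (j :: J) y))) => [|j _]; last first.
  exact: (@smooth_sumJ 1%nat r (fun J => G (j :: J))).
by apply: eq_bigr => j _; exact: (IH (fun J => G (j :: J))).
Qed.

End IndexSums.

Lemma big_swap3 (I1 I2 I3 : Type) (s1 : seq I1) (s2 : seq I2) (s3 : seq I3)
  (F : I1 -> I2 -> I3 -> R) :
  \big[Rplus/0%R]_(i <- s1) \big[Rplus/0%R]_(j <- s2) \big[Rplus/0%R]_(k <- s3) F i j k =
  \big[Rplus/0%R]_(k <- s3) \big[Rplus/0%R]_(i <- s1) \big[Rplus/0%R]_(j <- s2) F i j k.
Proof.
rewrite (eq_bigr (fun i => \big[Rplus/0%R]_(k <- s3) \big[Rplus/0%R]_(j <- s2) F i j k)).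
  exact: exchange_big.
by move=> i _; rewrite exchange_big.
Qed.

Lemma Dvec_twice (d : nat) (c : pt d -> 'I_d -> R) (G : pt d -> R) x :
  smooth 2 G -> (forall l, smooth 1 (fun y => c y l)) ->
  Dvec c (Dvec c G) x =
  sumI (fun l => \big[Rplus/0]_(k < d) (c x k * partial k (fun y => c y l) x * partial l G x)
                 + \big[Rplus/0]_(k < d) (c x l * (c x k * partial k (partial l G) x)))%R.
Proof.
move=> [_ HG] Hc; rewrite {2}/Dvec Dvec_sumI => [|l]; last by apply: smooth_mult; [exact: Hc | exact: HG].
apply: eq_bigr => l _; rewrite Dvec_mult; [|exact: Hc | exact: HG].
by rewrite /Dvec /sumI big_distrl big_distrr.
Qed.

Section Generator.
Variables (d m : nat) (a : 'I_d -> pt d -> R) (b : 'I_d -> 'I_m -> pt d -> R).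
Local Open Scope R_scope.

(* The Ito correction in a~ is exactly the first-order part of the
   Stratonovich square:  L^0 = D_a + 1/2 sum_j D_(b^j) D_(b^j). *)
Lemma L0_Dvec G x : smooth 2 G -> (forall k j, smooth 1 (b k j)) ->
  L0 a b G x = Dvec (fun y k => a k y) G x +
    / 2 * \big[Rplus/0]_(j < m) Dvec (fun y k => b k j y) (Dvec (fun y k => b k j y) G) x.
Proof.
move=> HG Hb; rewrite (eq_bigr _ (fun j _ => Dvec_twice x HG (fun l => Hb l j))) /L0 /atil /Dvec /sumI.
rewrite (eq_bigr (fun j => \big[Rplus/0]_(l < d) \big[Rplus/0]_(k < d)
     (b k j x * partial k (b l j) x * partial l G x)
   + \big[Rplus/0]_(l < d) \big[Rplus/0]_(k < d)
     (b l j x * (b k j x * partial k (partial l G) x)))); last by move=> j _; rewrite big_split.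
rewrite big_split /=.
rewrite (eq_bigr (fun k => a k x * partial k G x + / 2 * \big[Rplus/0]_(k' < d)
   \big[Rplus/0]_(l < m) (b k' l x * partial k' (b k l) x * partial k G x))); last first.
  move=> k _; rewrite Rmult_plus_distr_r Rmult_assoc big_distrl /=; congr (_ + / 2 * _).
  by apply: eq_bigr => k' _; rewrite big_distrl.
rewrite big_split /= -big_distrr /= Rmult_plus_distr_l Rplus_assoc big_swap3.
congr (_ + (_ + / 2 * _)); rewrite -big_swap3 -big_swap3.
apply: eq_bigr => j _; rewrite exchange_big; apply: eq_bigr => k _; apply: eq_bigr => l _; ring.
Qed.

End Generator.

Section TreeSums.
Variables (d m : nat) (f : pt d -> R) (a : 'I_d -> pt d -> R) (b : 'I_d -> 'I_m -> pt d -> R).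
Variable K : nat.
Hypotheses (HF : smooth K f) (HA : forall I, smooth K (a I))
  (HB : forall I j, smooth K (b I j)).
Local Open Scope R_scope.

Definition tree_term (t : tree) (x : pt d) : R :=
  sumJ (snum t)./2 (fun J => Fel f a b t J x / 2 ^ (snum t)./2).

Lemma gcol_smooth J col I : smooth K (gcol a b J col I).
Proof.
case: col => [|k] /=; first exact: HA.
by case: (List.nth_error J k) => [j|]; [exact: HB | exact: smooth_const].
Qed.

Lemma Fel_smoothK t J (k : nat) : (k + size t <= K)%nat -> smooth k (Fel f a b t J).
Proof.
move=> Hk; apply: Fel_smooth; first exact: smooth_le HF.
by move=> col I; exact: smooth_le (gcol_smooth _ _ _).
Qed.

Lemma tree_term_smooth t (k : nat) : (k + size t <= K)%nat -> smooth k (tree_term t).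
Proof.
move=> Hk; apply: smooth_sumJ => J; apply: smooth_mult; last exact: smooth_const.
exact: Fel_smoothK.
Qed.

Lemma Fel_graftK t col J x : valid t -> ((size t).+1 <= K)%nat ->
  Dvec (field a b J col) (Fel f a b t J) x =
  \big[Rplus/0]_(p <- iota 0 (nnodes t)) Fel f a b (t ++ [:: (p, col)]) J x.
Proof.
move=> Hv Hk; apply: Fel_graft => //; first exact: smooth_le HF.
by move=> col' I; exact: smooth_le (gcol_smooth _ _ _).
Qed.

Lemma Fel_graft_sig t J j x : valid t -> ((size t).+1 <= K)%nat ->
  Dvec (fun y k => b k j y) (Fel f a b t (rcons J j)) x =
  \big[Rplus/0]_(p <- iota 0 (nnodes t)) Fel f a b (t ++ [:: (p, Sig (size J))]) (rcons J j) x.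
Proof.
move=> Hv Hk; rewrite -Fel_graftK //; congr (Dvec _ _ x).
apply: functional_extensionality => y; apply: functional_extensionality => k.
by rewrite /field gcol_rcons.
Qed.

Lemma Dvec_tree_term c t x : (2 + size t <= K)%nat ->
  Dvec c (tree_term t) x = sumJ (snum t)./2 (fun J => Dvec c (Fel f a b t J) x / 2 ^ (snum t)./2).
Proof.
move=> Hk; rewrite Dvec_sumJ => [|J]; last first.
  by apply: smooth_mult; [apply: Fel_smoothK; lia | exact: smooth_const].
by apply: sumJ_ext => J _; rewrite Dvec_scal //; apply: Fel_smoothK; lia.
Qed.

Lemma tree_term_tau t x : valid t -> (2 + size t <= K)%nat ->
  Dvec (fun y k => a k y) (tree_term t) x =
  \big[Rplus/0]_(p <- iota 0 (nnodes t)) tree_term (t ++ [:: (p, Tau)]) x.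
Proof.
move=> Hv Hk; rewrite Dvec_tree_term //.
rewrite (eq_bigr (fun p => sumJ (snum t)./2 (fun J =>
  Fel f a b (t ++ [:: (p, Tau)]) J x / 2 ^ (snum t)./2))) => [|p _]; last first.
  by rewrite /tree_term snum_det.
rewrite -sumJ_big; apply: sumJ_ext => J _.
by rewrite /Rdiv -big_distrl -(Fel_graftK Tau) //; lia.
Qed.

(* The first D_(b^j) introduces j as the value of the next index variable. *)
Lemma Dvec_b_tree_term t j : valid t -> sig_bounded (snum t)./2 t ->
  (2 + size t <= K)%nat ->
  Dvec (fun y k => b k j y) (tree_term t) = fun y =>
  sumJ (snum t)./2 (fun J => \big[Rplus/0]_(p <- iota 0 (nnodes t))
    Fel f a b (t ++ [:: (p, Sig (snum t)./2)]) (rcons J j) y / 2 ^ (snum t)./2).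
Proof.
move=> Hv Hs Hk; apply: functional_extensionality => y; rewrite Dvec_tree_term //.
apply: sumJ_ext => J HJ; congr (_ / _).
rewrite -[Fel f a b t J](@Fel_cat _ _ f a b t J [:: j]) ?HJ // cats1 -HJ.
by rewrite Fel_graft_sig //; lia.
Qed.

Lemma Dvec_b_b_tree_term t j x : valid t -> sig_bounded (snum t)./2 t ->
  (2 + size t <= K)%nat ->
  Dvec (fun y k => b k j y) (Dvec (fun y k => b k j y) (tree_term t)) x =
  sumJ (snum t)./2 (fun J => \big[Rplus/0]_(p <- iota 0 (nnodes t))
    \big[Rplus/0]_(q <- iota 0 (nnodes t).+1)
      Fel f a b (t ++ [:: (p, Sig (snum t)./2); (q, Sig (snum t)./2)]) (rcons J j) x
        / 2 ^ (snum t)./2).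
Proof.
move=> Hv Hs Hk; set r := (snum t)./2.
have Hsm p J : smooth 1 (Fel f a b (t ++ [:: (p, Sig r)]) J).
  by apply: Fel_smoothK; rewrite size_cat /=; lia.
rewrite Dvec_b_tree_term // Dvec_sumJ => [|J]; last first.
  by apply: smooth_mult; [apply: smooth_sum => p _; exact: Hsm | exact: smooth_const].
apply: sumJ_ext => J HJ; rewrite Dvec_scal; last by apply: smooth_sum => p _; exact: Hsm.
rewrite Dvec_sum => [|p _]; last exact: Hsm.
congr (_ / _); apply: eq_big_seq => p; rewrite mem_iota => /andP [_ Hp].
have Hvp : valid (t ++ [:: (p, Sig r)]) by rewrite cats1; apply: valid_rcons.
rewrite /r -HJ Fel_graft_sig ?HJ //; last by rewrite size_cat /=; lia.
by rewrite /nnodes size_cat addn1; apply: eq_bigr => q _; rewrite -catA.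
Qed.

(* 1/2 sum_j D_(b^j) D_(b^j) maps the term of t to the terms of its
   sigma-pair growths; the factor 1/2 matches the extra power of 2. *)
Lemma tree_term_sig t x : valid t -> sig_bounded (snum t)./2 t -> (2 + size t <= K)%nat ->
  / 2 * \big[Rplus/0]_(j < m) Dvec (fun y k => b k j y) (Dvec (fun y k => b k j y) (tree_term t)) x =
  \big[Rplus/0]_(p <- iota 0 (nnodes t)) \big[Rplus/0]_(q <- iota 0 (nnodes t).+1)
     tree_term (t ++ [:: (p, Sig (snum t)./2); (q, Sig (snum t)./2)]) x.
Proof.
move=> Hv Hs Hk; set r := (snum t)./2.
set X := fun j p q J => Fel f a b (t ++ [:: (p, Sig r); (q, Sig r)]) (rcons J j) x.
rewrite (eq_bigr _ (fun j _ => Dvec_b_b_tree_term j x Hv Hs Hk)) -sumJ_big -sumJ_scal.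
rewrite (eq_bigr (fun p => sumJ r (fun J => \big[Rplus/0]_(q <- iota 0 (nnodes t).+1)
    \big[Rplus/0]_(j < m) (X j p q J / 2 ^ r.+1)))) => [|p _]; last first.
  rewrite sumJ_big; apply: eq_bigr => q _.
  by rewrite /tree_term snum_sto sumJ_rcons.
rewrite -sumJ_big; apply: sumJ_ext => J _.
rewrite big_swap3 big_distrr; apply: eq_bigr => j _.
rewrite /Rdiv big_distrl big_distrr; apply: eq_bigr => p _.
rewrite big_distrl big_distrr; apply: eq_bigr => q _.
by rewrite /= Rinv_mult /X /r; ring.
Qed.

Lemma L0_tree_sum n x : ((2 * n).+2 <= K)%nat ->
  L0 a b (fun y => \big[Rplus/0]_(t <- trees_of_order n) tree_term t y) x =
  \big[Rplus/0]_(t <- trees_of_order n.+1) tree_term t x.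
Proof.
move=> HK; set T := trees_of_order n.
have Tinfo (t : tree) : t \in T -> [/\ valid t, sig_bounded (snum t)./2 t & (2 + size t <= K)%nat].
  move=> /trees_of_order_sound [Ht Hr]; have [Hv Ho Hs] := LTS_inv Ht.
  by split => //; have := size_rho Ho; rewrite Hr; lia.
have Hsm (t : tree) k : t \in T -> (k <= 2)%nat -> smooth k (tree_term t).
  by move=> /Tinfo [_ _ Hz] k2; apply: tree_term_smooth; lia.
have Hb1 k j : smooth 1 (b k j) by apply: smooth_le (HB k j); lia.
have Hsum : (fun y => \big[Rplus/0]_(t <- T) tree_term t y) = fun y =>
    \big[Rplus/0]_(t <- T | t \in T) tree_term t y.
  by apply: functional_extensionality => y; rewrite big_seq.
rewrite Hsum L0_Dvec //; last by apply: smooth_sum => t Ht; exact: Hsm.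
have Dsum c : Dvec c (fun y => \big[Rplus/0]_(t <- T | t \in T) tree_term t y) =
    fun y => \big[Rplus/0]_(t <- T | t \in T) Dvec c (tree_term t) y.
  by apply: functional_extensionality => y; rewrite Dvec_sum // => t Ht; exact: Hsm.
rewrite Dvec_sum => [|t Ht]; last exact: Hsm.
rewrite (eq_bigr (fun j => \big[Rplus/0]_(t <- T | t \in T)
   Dvec (fun y k => b k j y) (Dvec (fun y k => b k j y) (tree_term t)) x)) => [|j _]; last first.
  rewrite Dsum Dvec_sum // => t Ht.
  by apply: smooth_Dvec => [I|]; [exact: Hb1 | exact: Hsm].
rewrite [X in _ + / 2 * X]exchange_big big_distrr -big_split /= sum_trees_of_order [RHS]big_seq.
apply: eq_bigr => t Ht; have [Hv Hs Hz] := Tinfo t Ht.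
by rewrite tree_term_tau // tree_term_sig.
Qed.

End TreeSums.

Lemma iter_L0_tree_sum (d m N : nat) (f : pt d -> R) (a : 'I_d -> pt d -> R)
  (b : 'I_d -> 'I_m -> pt d -> R) : smooth (2 * N) f ->
  (forall I, smooth (2 * N) (a I)) -> (forall I j, smooth (2 * N) (b I j)) ->
  forall n, (n <= N)%nat ->
  iter n (L0 a b) f = fun x => \big[Rplus/0%R]_(t <- trees_of_order n) tree_term f a b t x.
Proof.
move=> HF HA HB; elim=> [|n IH] Hn.
  apply: functional_extensionality => x.
  by rewrite /= big_cons big_nil /tree_term /Fel /= /Rdiv Rinv_1 Rmult_1_r Rplus_0_r.
rewrite /= IH; last by lia.
by apply: functional_extensionality => x; apply: (L0_tree_sum HF HA HB); lia.
Qed.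

Lemma In_mem (T : eqType) (x : T) (s : seq T) : List.In x s <-> x \in s.
Proof.
elim: s => [//|y s IH] /=; rewrite inE; split.
  by case=> [->|/IH ->]; rewrite ?eqxx ?orbT.
by case/orP => [/eqP ->|/IH H]; [left | right].
Qed.

Lemma NoDup_uniq (T : eqType) (s : seq T) : List.NoDup s -> uniq s.
Proof.
elim: s => [//|x s IH] /List.NoDup_cons_iff [H1 H2] /=.
by rewrite IH // andbT; apply/negP => /In_mem.
Qed.

(* The theorem: the list ts enumerates trees_of_order n up to permutation. *)
Theorem mainTheorem5 (d m n : nat) (Hd : (0 < d)%N) (Hm : (0 < m)%N)
  (f : pt d -> R) (a : 'I_d -> pt d -> R) (b : 'I_d -> 'I_m -> pt d -> R)
  (Hf : Ck (2 * n) f)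
  (Ha : forall i : 'I_d, Ck (2 * n) (a i))
  (Hb : forall (k : 'I_d) (j : 'I_m), Ck (2 * n + 1) (b k j))
  (ts : seq tree)
  (Hts_nodup : List.NoDup ts)
  (Hts : forall t : tree, List.In t ts <-> (LTS t /\ rho t = n))
  (x0 : pt d) :
  iter n (L0 a b) f x0 =
  \big[Rplus/0%R]_(t <- ts)
     sumJ (snum t)./2 (fun J => (Fel f a b t J x0 / 2 ^ (snum t)./2)%R).
Proof.
have HB I j : smooth (2 * n) (b I j).
  by apply: (@smooth_le _ _ (2 * n + 1)); [lia | apply: Ck_smooth].
rewrite (iter_L0_tree_sum (Ck_smooth Hf) (fun I => Ck_smooth (Ha I)) HB (leqnn n)).
have Hperm : perm_eq (trees_of_order n) ts.
  apply: uniq_perm; [exact: trees_of_order_uniq | exact: NoDup_uniq | move=> t].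
  apply/idP/idP => [/trees_of_order_sound Ht | /In_mem /Hts [Ht <-]].
    by apply/In_mem/Hts.
  exact: trees_of_order_complete.
by rewrite (perm_big _ Hperm).
Qed.
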